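(* Let $\langle L,\leq\rangle$ and $\langle K,\leq\rangle$ be complete lattices and $f:L\to K$ a surjective lattice morphism. Let $O:L\to L$ be an operator and $A:L^2\to L^2$ an approximator of $O$ such that both $O$ and $A$ respect $f$, and let $O_f$ and $A_f$ be their projections on $K$. If $(x,y)$ is the $A$-well-founded fixpoint of $O$, then $(f(x),f(y))$ is the $A_f$-well-founded fixpoint of $O_f$.
   Context: A lattice morphism $f:L\to K$ satisfies $f(\bigvee X)=\bigvee f(X)$ and $f(\bigwedge X)=\bigwedge f(X)$ for all $X\subseteq L$. $L^2$ carries the precision order $(x,y)\leq_p(u,v)$ iff $x\leq u$ and $v\leq y$; write $(x,y)_1=x,(x,y)_2=y$. An approximator of $O$ is a $\leq_p$-monotone $A:L^2\to L^2$ with $A(x,x)_1\leq O(x)\leq A(x,x)_2$ for all $x$, assumed symmetric ($A(x,y)_1=A(y,x)_2$). $O$ respects $f$ if $f(x)=f(y)$ implies $f(O(x))=f(O(y))$; then (for surjective $f$) $O_f$ is the unique operator on $K$ with $O_f\circ f=f\circ O$. With $f^2(x,y)=(f(x),f(y))$, $A$ respects $f$ if $f^2(p)=f^2(q)$ implies $f^2(A(p))=f^2(A(q))$; $A_f$ is the unique operator on $K^2$ with $A_f\circ f^2=f^2\circ A$. For an operator $B$ on a bilattice $M^2$ (and any operator $P$ on $M$), a partial $B$-stable fixpoint is a pair $(x,y)$ with $x=\mathrm{lfp}(B(\cdot,y)_1)$ and $y=\mathrm{lfp}(B(x,\cdot)_2)$; the $B$-well-founded fixpoint of $P$ is the $\leq_p$-least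 (least precise) partial $B$-stable fixpoint. *)

Record complete_lattice := CompleteLattice {
  carrier :> Type;
  le : carrier -> carrier -> Prop;
  le_refl : forall x, le x x;
  le_trans : forall x y z, le x y -> le y z -> le x z;
  le_antisym : forall x y, le x y -> le y x -> x = y;
  sup : (carrier -> Prop) -> carrier;
  sup_ub : forall (X : carrier -> Prop) x, X x -> le x (sup X);
  sup_least : forall (X : carrier -> Prop) u,
      (forall x, X x -> le x u) -> le (sup X) u;
  inf : (carrier -> Prop) -> carrier;
  inf_lb : forall (X : carrier -> Prop) x, X x -> le (inf X) x;
  inf_greatest : forall (X : carrier -> Prop) u,
      (forall x, X x -> le u x) -> le u (inf X)
}.

Arguments le {c} _ _.
Arguments sup {c} _.
Arguments inf {c} _.

Definition image {L K : Type} (f : L -> K) (X : L -> Prop) : K -> Prop :=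
  fun y => exists x, X x /\ f x = y.

Definition lattice_morphism {L K : complete_lattice} (f : L -> K) : Prop :=
  forall X : L -> Prop, f (sup X) = sup (image f X) /\ f (inf X) = inf (image f X).

Definition surjective {L K : Type} (f : L -> K) : Prop :=
  forall y, exists x, f x = y.

Definition lep {L : complete_lattice} (p q : L * L) : Prop :=
  le (fst p) (fst q) /\ le (snd q) (snd p).

Definition approximator {L : complete_lattice} (A : L * L -> L * L) (O : L -> L) : Prop :=
  (forall p q, lep p q -> lep (A p) (A q)) /\
  (forall x, le (fst (A (x, x))) (O x) /\ le (O x) (snd (A (x, x)))) /\
  (forall x y, fst (A (x, y)) = snd (A (y, x))).

Definition f2 {L K : Type} (f : L -> K) (p : L * L) : K * K := (f (fst p), f (snd p)).

Definition respects_op {L K : Type} (f : L -> K) (O : L -> L) : Prop :=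
  forall x y, f x = f y -> f (O x) = f (O y).

Definition respects_approx {L K : Type} (f : L -> K) (A : L * L -> L * L) : Prop :=
  forall p q, f2 f p = f2 f q -> f2 f (A p) = f2 f (A q).

Definition is_lfp {M : complete_lattice} (P : M -> M) (x : M) : Prop :=
  P x = x /\ forall z, P z = z -> le x z.

Definition partial_stable_fixpoint {M : complete_lattice} (B : M * M -> M * M)
    (p : M * M) : Prop :=
  is_lfp (fun z => fst (B (z, snd p))) (fst p) /\
  is_lfp (fun z => snd (B (fst p, z))) (snd p).

Definition wf_fixpoint {M : complete_lattice} (B : M * M -> M * M) (p : M * M) : Prop :=
  partial_stable_fixpoint B p /\
  forall q, partial_stable_fixpoint B q -> lep p q.


(* The partial stable fixpoints of an approximator B are exactly the fixpoints
   of its stable operator S_B(u, v) = (lfp B(., v)_1, lfp B(u, .)_2), which is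
   monotone for the precision order; so the B-well-founded fixpoint is the
   least fixpoint of S_B on the bilattice.  A surjective complete-lattice
   morphism f has a greatest element in each fibre, and any monotone map with
   that property carries the least fixpoint of P to the least fixpoint of any Q
   with Q o f = f o P.  Applying this first to f (giving S_{A_f} o f^2 =
   f^2 o S_A) and then to f^2 on the bilattices proves the theorem. *)

Definition monotone {M N : complete_lattice} (g : M -> N) : Prop :=
  forall a b, le a b -> le (g a) (g b).

Definition has_fibre_maxima {M N : complete_lattice} (g : M -> N) : Prop :=
  forall z, exists z1, g z1 = g z /\ forall z', g z' = g z -> le z' z1.

Section LeastFixpoint.
Context {M : complete_lattice}.
Implicit Types P Q : M -> M.

Definition lfp P : M := inf (fun z => le (P z) z).

Lemma lfp_le_prefixpoint P z : le (P z) z -> le (lfp P) z.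
Proof. intros Hz. apply inf_lb. exact Hz. Qed.

Lemma lfp_is_lfp P : monotone P -> is_lfp P (lfp P).
Proof.
  intros HP.
  assert (Hpre : le (P (lfp P)) (lfp P)).
  { apply inf_greatest. intros z Hz.
    apply le_trans with (P z); [apply HP, lfp_le_prefixpoint, Hz | exact Hz]. }
  split.
  - apply le_antisym; [exact Hpre |].
    apply lfp_le_prefixpoint, HP, Hpre.
  - intros z Hz. apply lfp_le_prefixpoint. rewrite Hz. apply le_refl.
Qed.

Lemma is_lfp_unique P x : monotone P -> is_lfp P x -> x = lfp P.
Proof.
  intros HP [Hfix Hleast]. destruct (lfp_is_lfp P HP) as [Hfix' Hleast'].
  apply le_antisym; [apply Hleast, Hfix' | apply Hleast', Hfix].
Qed.

Lemma lfp_le_lfp P Q : (forall z, le (P z) (Q z)) -> le (lfp P) (lfp Q).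
Proof.
  intros HPQ. apply inf_greatest. intros z Hz.
  apply lfp_le_prefixpoint. apply le_trans with (Q z); [apply HPQ | exact Hz].
Qed.

End LeastFixpoint.

Lemma lfp_transfer {M N : complete_lattice} (g : M -> N) (P : M -> M) (Q : N -> N)
  (x : M) :
  monotone g -> surjective g -> has_fibre_maxima g -> monotone P ->
  (forall z, Q (g z) = g (P z)) -> is_lfp P x -> is_lfp Q (g x).
Proof.
  intros Hg Hsurj Hmax HP Hcomm Hx. split.
  - rewrite Hcomm. destruct Hx as [-> _]. reflexivity.
  - intros w Hw. destruct (Hsurj w) as [z <-].
    destruct (Hmax z) as [z1 [Hz1 Hz1_max]].
    (* P z1 lies in the fibre of the fixpoint g z1, so z1 is a prefixpoint of P. *)
    assert (Hpre : le (P z1) z1).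
    { apply Hz1_max. rewrite <- Hcomm, Hz1. exact Hw. }
    rewrite <- Hz1. apply Hg.
    rewrite (is_lfp_unique P x HP Hx). apply lfp_le_prefixpoint, Hpre.
Qed.

Definition bilattice (M : complete_lattice) : complete_lattice.
Proof.
  refine (@CompleteLattice (M * M) (@lep M) _ _ _
    (fun X => (sup (fun a => exists b, X (a, b)), inf (fun b => exists a, X (a, b)))) _ _
    (fun X => (inf (fun a => exists b, X (a, b)), sup (fun b => exists a, X (a, b)))) _ _).
  - intros p. split; apply le_refl.
  - intros p q r [H1 H2] [H3 H4]. split; eapply le_trans; eauto.
  - intros [a b] [c d] [H1 H2] [H3 H4]. simpl in *. f_equal; apply le_antisym; auto.
  - intros X [a b] H. split; simpl.
    + apply sup_ub. exists b. exact H.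
    + apply inf_lb. exists a. exact H.
  - intros X u H. split; simpl.
    + apply sup_least. intros a [b Hb]. apply (H _ Hb).
    + apply inf_greatest. intros b [a Ha]. apply (H _ Ha).
  - intros X [a b] H. split; simpl.
    + apply inf_lb. exists b. exact H.
    + apply sup_ub. exists a. exact H.
  - intros X u H. split; simpl.
    + apply inf_greatest. intros a [b Hb]. apply (H _ Hb).
    + apply sup_least. intros b [a Ha]. apply (H _ Ha).
Defined.

Section LatticeMorphism.
Context {L K : complete_lattice} (f : L -> K).
Hypothesis Hmorph : lattice_morphism f.

Lemma lattice_morphism_monotone : monotone f.
Proof.
  intros a b Hab.
  assert (Hsup : sup (fun z => z = a \/ z = b) = b).
  { apply le_antisym.
    - apply sup_least. intros z [-> | ->]; [exact Hab | apply le_refl].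
    - apply sup_ub. right. reflexivity. }
  destruct (Hmorph (fun z => z = a \/ z = b)) as [Hf _].
  rewrite Hsup in Hf. rewrite Hf.
  apply sup_ub. exists a. split; [left |]; reflexivity.
Qed.

Lemma lattice_morphism_lift_ge a1 a2 :
  le (f a1) (f a2) -> exists a, f a = f a2 /\ le a1 a.
Proof.
  intros H. exists (sup (fun z => z = a1 \/ z = a2)). split.
  - destruct (Hmorph (fun z => z = a1 \/ z = a2)) as [-> _]. apply le_antisym.
    + apply sup_least. intros w [z [[-> | ->] <-]]; [exact H | apply le_refl].
    + apply sup_ub. exists a2. split; [right |]; reflexivity.
  - apply sup_ub. left. reflexivity.
Qed.

Lemma lattice_morphism_lift_le a1 a2 :
  le (f a2) (f a1) -> exists a, f a = f a2 /\ le a a1.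
Proof.
  intros H. exists (inf (fun z => z = a1 \/ z = a2)). split.
  - destruct (Hmorph (fun z => z = a1 \/ z = a2)) as [_ ->]. apply le_antisym.
    + apply inf_lb. exists a2. split; [right |]; reflexivity.
    + apply inf_greatest. intros w [z [[-> | ->] <-]]; [exact H | apply le_refl].
  - apply inf_lb. left. reflexivity.
Qed.

Lemma lattice_morphism_fibre_sup a : f (sup (fun z => f z = f a)) = f a.
Proof.
  destruct (Hmorph (fun z => f z = f a)) as [-> _]. apply le_antisym.
  - apply sup_least. intros w [z [Hz <-]]. rewrite Hz. apply le_refl.
  - apply sup_ub. exists a. split; reflexivity.
Qed.

Lemma lattice_morphism_fibre_inf a : f (inf (fun z => f z = f a)) = f a.
Proof.
  destruct (Hmorph (fun z => f z = f a)) as [_ ->]. apply le_antisym.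
  - apply inf_lb. exists a. split; reflexivity.
  - apply inf_greatest. intros w [z [Hz <-]]. rewrite Hz. apply le_refl.
Qed.

Lemma lattice_morphism_fibre_maxima : has_fibre_maxima f.
Proof.
  intros a. exists (sup (fun z => f z = f a)). split.
  - apply lattice_morphism_fibre_sup.
  - intros z Hz. apply sup_ub. exact Hz.
Qed.

Lemma f2_monotone : @monotone (bilattice L) (bilattice K) (f2 f).
Proof.
  intros [a b] [c d] [H1 H2]. split; simpl in *; apply lattice_morphism_monotone; assumption.
Qed.

(* In the precision order the top of the fibre of (a, b) is (sup, inf) of the
   fibres of a and b. *)
Lemma f2_fibre_maxima : @has_fibre_maxima (bilattice L) (bilattice K) (f2 f).
Proof.
  intros [a b]. exists (sup (fun z => f z = f a), inf (fun z => f z = f b)). split.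
  - unfold f2. simpl. rewrite lattice_morphism_fibre_sup, lattice_morphism_fibre_inf.
    reflexivity.
  - intros [c d] H. unfold f2 in H. simpl in H. injection H as H1 H2.
    split; simpl; [apply sup_ub | apply inf_lb]; assumption.
Qed.

Hypothesis Hsurj : surjective f.

Lemma f2_surjective : surjective (f2 f).
Proof.
  intros [u v]. destruct (Hsurj u) as [a <-], (Hsurj v) as [b <-].
  exists (a, b). reflexivity.
Qed.

Lemma projection_monotone (A : L * L -> L * L) (Af : K * K -> K * K) :
  @monotone (bilattice L) (bilattice L) A ->
  (forall p, Af (f2 f p) = f2 f (A p)) ->
  @monotone (bilattice K) (bilattice K) Af.
Proof.
  intros HA HAf [u1 v1] [u2 v2] [Hu Hv]. simpl in *.
  destruct (Hsurj u1) as [a1 <-], (Hsurj u2) as [a2 <-].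
  destruct (Hsurj v1) as [b1 <-], (Hsurj v2) as [b2 <-].
  destruct (lattice_morphism_lift_ge a1 a2 Hu) as [a [<- Ha]].
  destruct (lattice_morphism_lift_le b1 b2 Hv) as [b [<- Hb]].
  change (lep (Af (f2 f (a1, b1))) (Af (f2 f (a, b)))).
  rewrite !HAf. destruct (HA (a1, b1) (a, b)) as [H1 H2]; [split; assumption |].
  split; apply lattice_morphism_monotone; assumption.
Qed.

Lemma lattice_morphism_lfp (P : L -> L) (Q : K -> K) :
  monotone P -> monotone Q -> (forall z, Q (f z) = f (P z)) -> lfp Q = f (lfp P).
Proof.
  intros HP HQ Hcomm. symmetry. apply is_lfp_unique; [exact HQ |].
  apply lfp_transfer with P; try assumption.
  - apply lattice_morphism_monotone.
  - apply lattice_morphism_fibre_maxima.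
  - apply lfp_is_lfp, HP.
Qed.

End LatticeMorphism.

Definition stable_op {M : complete_lattice} (B : M * M -> M * M) (p : M * M) : M * M :=
  (lfp (fun z => fst (B (z, snd p))), lfp (fun z => snd (B (fst p, z)))).

Section StableOperator.
Context {M : complete_lattice} (B : M * M -> M * M).
Hypothesis HB : @monotone (bilattice M) (bilattice M) B.

Lemma stable_op_fst_monotone (v : M) : monotone (fun z => fst (B (z, v))).
Proof. intros z z' H. apply (HB (z, v) (z', v)). split; [exact H | apply le_refl]. Qed.

Lemma stable_op_snd_monotone (u : M) : monotone (fun z => snd (B (u, z))).
Proof. intros z z' H. apply (HB (u, z') (u, z)). split; [apply le_refl | exact H]. Qed.

Lemma stable_op_monotone : @monotone (bilattice M) (bilattice M) (stable_op B).
Proof.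
  intros [a b] [a' b'] [H1 H2]. simpl in *. split; simpl; apply lfp_le_lfp; intros z.
  - apply (HB (z, b) (z, b')). split; [apply le_refl | exact H2].
  - apply (HB (a, z) (a', z)). split; [exact H1 | apply le_refl].
Qed.

Lemma partial_stable_fixpointE p :
  partial_stable_fixpoint B p <-> stable_op B p = p.
Proof.
  destruct p as [a b]. unfold partial_stable_fixpoint, stable_op. simpl. split.
  - intros [H1 H2].
    rewrite <- (is_lfp_unique _ _ (stable_op_fst_monotone b) H1),
      <- (is_lfp_unique _ _ (stable_op_snd_monotone a) H2).
    reflexivity.
  - intros H. injection H as Ha Hb. split.
    + rewrite <- Ha. apply lfp_is_lfp, stable_op_fst_monotone.
    + rewrite <- Hb. apply lfp_is_lfp, stable_op_snd_monotone.
Qed.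

Lemma wf_fixpointE p :
  wf_fixpoint B p <-> @is_lfp (bilattice M) (stable_op B) p.
Proof.
  unfold wf_fixpoint, is_lfp. split; intros [Hfix Hleast]; split.
  - apply partial_stable_fixpointE, Hfix.
  - intros q Hq. apply Hleast, partial_stable_fixpointE, Hq.
  - apply partial_stable_fixpointE, Hfix.
  - intros q Hq. apply Hleast, partial_stable_fixpointE, Hq.
Qed.

End StableOperator.

Lemma stable_op_f2 {L K : complete_lattice} (f : L -> K)
  (A : L * L -> L * L) (Af : K * K -> K * K) :
  lattice_morphism f -> surjective f ->
  @monotone (bilattice L) (bilattice L) A ->
  (forall p, Af (f2 f p) = f2 f (A p)) ->
  forall p, stable_op Af (f2 f p) = f2 f (stable_op A p).
Proof.
  intros Hmorph Hsurj HA HAf [a b].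
  assert (HAfmono := projection_monotone f Hmorph Hsurj A Af HA HAf).
  unfold stable_op, f2. simpl. f_equal; apply lattice_morphism_lfp; try assumption.
  - apply stable_op_fst_monotone, HA.
  - apply stable_op_fst_monotone, HAfmono.
  - intros z. change (fst (Af (f2 f (z, b))) = f (fst (A (z, b)))). rewrite HAf. reflexivity.
  - apply stable_op_snd_monotone, HA.
  - apply stable_op_snd_monotone, HAfmono.
  - intros z. change (snd (Af (f2 f (a, z))) = f (snd (A (a, z)))). rewrite HAf. reflexivity.
Qed.

Theorem theorem3p4 (L K : complete_lattice) (f : L -> K)
  (Hmorph : lattice_morphism f) (Hsurj : surjective f)
  (O : L -> L) (A : L * L -> L * L)
  (HA : approximator A O)
  (HOf : respects_op f O) (HAf : respects_approx f A)
  (Of : K -> K) (HOf_def : forall x, Of (f x) = f (O x))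
  (Af : K * K -> K * K) (HAf_def : forall p, Af (f2 f p) = f2 f (A p))
  (x y : L) :
  wf_fixpoint A (x, y) -> wf_fixpoint Af (f x, f y).
Proof.
  assert (HAmono : @monotone (bilattice L) (bilattice L) A) by exact (proj1 HA).
  assert (HAfmono := projection_monotone f Hmorph Hsurj A Af HAmono HAf_def).
  intros Hwf. apply (wf_fixpointE Af HAfmono).
  change (f x, f y) with (f2 f (x, y)).
  apply (@lfp_transfer (bilattice L) (bilattice K) (f2 f) (stable_op A)).
  - apply f2_monotone, Hmorph.
  - apply f2_surjective, Hsurj.
  - apply f2_fibre_maxima, Hmorph.
  - apply stable_op_monotone, HAmono.
  - apply stable_op_f2; assumption.
  - apply (wf_fixpointE A HAmono), Hwf.
Qed.
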